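(* Let $x,y$ be non-commuting indeterminates and let $C=xyx^{-1}y^{-1}$. Let $(R_n)_{n\in\mathbb Z}$ be the unique solution of $$R_{n+1}CR_{n-1}=R_n^2+1\qquad(n\in\mathbb Z)$$ with $R_0=yxy^{-1}$ and $R_1=y$. Then for every $n\in\mathbb Z$, $R_n$ is a Laurent polynomial in $x,y$ whose coefficients all lie in $\{0,1\}$. Moreover, let $n\ge 0$ and set $$y_1=R_1R_0^{-1}=y^2x^{-1}y^{-1},\qquad y_2=R_1^{-1}R_0^{-1}=x^{-1}y^{-1},\qquad y_3=R_1^{-1}R_0=xy^{-1}.$$ Consider paths on $\{0,1,2,3\}$ with $2n$ steps of the form $i\to i\pm1$ that start and end at $0$. The weight of such a path is the product, from left to right in the order the steps are taken, of $1$ for each step $i\to i+1$ and $y_i$ for each step $i\to i-1$. Then each Laurent monomial appearing in $R_nR_0^{-1}$ is the weight of exactly one such path.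
   Context: Work in the free skew field (non-commutative rational functions) over $\mathbb C$ generated by $x,y$. A Laurent polynomial in $x,y$ is a $\mathbb Z$-linear combination of words (Laurent monomials) in $x^{\pm1},y^{\pm1}$. Its coefficients are those of its expansion in reduced words. *)

(* Integral group ring Z[F_2] of the free group on x, y,
   i.e. non-commutative Laurent polynomials in x, y. *)
From HB Require Import structures.
From mathcomp Require Import all_boot all_order all_algebra.
Set Implicit Arguments. Unset Strict Implicit. Unset Printing Implicit Defensive.
Import Order.TTheory GRing.Theory Num.Theory.
Local Open Scope ring_scope.

(* A letter is (is_y, is_inverse): x = (false,false), x^-1 = (false,true),
   y = (true,false), y^-1 = (true,true). *)
Definition letter := (bool * bool)%type.
Definition word := seq letter.

Definition Lx : letter := (false, false).
Definition Lxi : letter := (false, true).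
Definition Ly : letter := (true, false).
Definition Lyi : letter := (true, true).

Definition linv (a : letter) : letter := (a.1, ~~ a.2).

Definition reduce (w : word) : word :=
  foldr (fun a s => match s with
                    | b :: s' => if b == linv a then s' else a :: s
                    | [::] => [:: a]
                    end) [::] w.

(* A Laurent polynomial is represented by a formal Z-linear combination of
   (possibly non-reduced) words; its coefficients are those of its expansion
   in reduced words. *)
Definition lpoly := seq (int * word)%type.

Definition coef (p : lpoly) (w : word) : int :=
  \sum_(t <- p | reduce t.2 == w) t.1.

Definition lpeq (p q : lpoly) : Prop := forall w, coef p w = coef q w.

Definition ladd (p q : lpoly) : lpoly := p ++ q.
Definition lmul (p q : lpoly) : lpoly :=
  [seq (a.1 * b.1, a.2 ++ b.2) | a <- p, b <- q].
Definition lmono (w : word) : lpoly := [:: (1, w)].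
Definition lone : lpoly := lmono [::].

Definition wC : word := [:: Lx; Ly; Lxi; Lyi].
Definition wR0 : word := [:: Ly; Lx; Lyi].
Definition wR1 : word := [:: Ly].
Definition wR0inv : word := [:: Ly; Lxi; Lyi].
Definition wy1 : word := [:: Ly; Ly; Lxi; Lyi].
Definition wy2 : word := [:: Lxi; Lyi].
Definition wy3 : word := [:: Lx; Lyi].

Definition ywt (i : nat) : word :=
  match i with 1 => wy1 | 2 => wy2 | 3 => wy3 | _ => [::] end.

(* A path is a list of steps (true = up i -> i+1, false = down i -> i-1).
   pathw h p = Some (weight) if the path starting at height h stays in
   {0,1,2,3} and ends at 0; the weight is the left-to-right product of
   1 for an up step and y_i for a down step i -> i-1. *)
Fixpoint pathw (h : nat) (p : seq bool) : option word :=
  match p with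
  | [::] => if h == 0%N then Some [::] else None
  | true :: p' => if (h < 3)%N then pathw h.+1 p' else None
  | false :: p' =>
      if h == 0%N then None
      else match pathw h.-1 p' with
           | Some u => Some (ywt h ++ u)
           | None => None
           end
  end.

(* For n >= 0, R_n R_0^-1 is the sum of the weights of the paths of length 2n from 0 to 0
   in {0,1,2,3}, and R_0^-1 R_(-n) the corresponding sum over paths from 2 to 2.  Cutting
   such paths into pairs of steps gives a transfer matrix on the heights {0, 2}, whence the
   linear recurrence R_(n+1) = (y_1 + y_2 + y_3) R_n - C R_(n-1) for all n.  Two initial
   values turn it into a right-handed recurrence R_(n+1) = R_n K' - R_(n-1) C^-1 with
   K' C = y_1 + y_2 + y_3, and the two recurrences together make R_(n+1) C R_(n-1) - R_n^2
   independent of n.  Coefficients are 0 or 1, and each monomial comes from a unique path,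
   because the reduced weight of a path determines its sequence of down-step heights, which
   determines the path. *)

From HB Require Import structures.
From mathcomp Require Import all_boot all_order all_algebra zify.
Set Implicit Arguments. Unset Strict Implicit. Unset Printing Implicit Defensive.
Import Order.TTheory GRing.Theory Num.Theory.
Local Open Scope ring_scope.

Lemma mem_cons_map (T : eqType) (b c : T) p s :
  (b :: p \in [seq c :: q | q <- s]) = (b == c) && (p \in s).
Proof.
by apply/mapP/andP => [[q qs [-> ->]] | [/eqP -> ps]]; last exists p.
Qed.

Lemma count_le1_uniq (T : eqType) (P : pred T) s :
  uniq s -> (forall x y, P x -> P y -> x = y) -> (count P s <= 1)%N.
Proof.
move=> us Pinj; rewrite -size_filter.
have : all P (filter P s) by apply: filter_all.
have : uniq (filter P s) by apply: filter_uniq.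
case: (filter P s) => [|x [|y r]] //= /andP[xr _] /and3P[Px Py _].
by rewrite (Pinj _ _ Px Py) mem_head in xr.
Qed.

Lemma int_ind_succ_pred (P : int -> Prop) :
  P 0 -> (forall n, P n -> P (n + 1)) -> (forall n, P n -> P (n - 1)) -> forall n, P n.
Proof.
move=> P0 Ps Pp; elim/int_ind => // n Pn.
  by rewrite -addn1 PoszD; apply: Ps.
by rewrite -addn1 PoszD opprD; apply: Pp.
Qed.

Definition reduce_step (a : letter) (s : word) : word :=
  if s is b :: s' then (if b == linv a then s' else a :: s) else [:: a].

Definition reduced (w : word) : bool := sorted (fun a b => b != linv a) w.

Lemma reduce_cons a w : reduce (a :: w) = reduce_step a (reduce w).
Proof. by []. Qed.

Lemma reduce_cat u v : reduce (u ++ v) = foldr reduce_step (reduce v) u.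
Proof. by rewrite /reduce foldr_cat. Qed.

Lemma linvK : involutive linv.
Proof. by case=> [[] []]. Qed.

Lemma reduced_behead a w : reduced (a :: w) -> reduced w.
Proof. by case: w => //= b w /andP[]. Qed.

Lemma reduced_step a s : reduced s -> reduced (reduce_step a s).
Proof.
case: s => [|b s] //= rs; case: ifP => [_|/negbT nb]; first exact: reduced_behead rs.
by rewrite /= nb.
Qed.

Lemma reduced_foldr_step s u : reduced s -> reduced (foldr reduce_step s u).
Proof. by move=> rs; elim: u => //= a u; apply: reduced_step. Qed.

Lemma reduce_reduced w : reduced (reduce w).
Proof. exact: reduced_foldr_step. Qed.

Lemma reduce_id w : reduced w -> reduce w = w.
Proof.
elim: w => //= a w IH rw; rewrite IH ?(reduced_behead rw) //.
by case: w rw {IH} => //= b w /andP[/negbTE ->].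
Qed.

Lemma reduceK w : reduce (reduce w) = reduce w.
Proof. exact/reduce_id/reduce_reduced. Qed.

Lemma reduce_stepK a s : reduced s -> reduce_step a (reduce_step (linv a) s) = s.
Proof.
case: s => [|b s] /=; first by rewrite eqxx.
case: eqP => [-> | _] rs /=; last by rewrite eqxx.
rewrite linvK; case: s rs => //= c s /andP[nc _].
by rewrite linvK in nc; rewrite (negbTE nc).
Qed.

Lemma foldr_step_reduce s u :
  reduced s -> foldr reduce_step s (reduce u) = foldr reduce_step s u.
Proof.
move=> rs; elim: u => //= a u <-.
have : reduced (reduce u) by apply: reduce_reduced.
case: (reduce u) => //= b r _; case: eqP => // ->.
by rewrite reduce_stepK // reduced_foldr_step.
Qed.

Lemma reduce_catr u v : reduce (u ++ reduce v) = reduce (u ++ v).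
Proof. by rewrite !reduce_cat reduceK. Qed.

Lemma reduce_catl u v : reduce (reduce u ++ v) = reduce (u ++ v).
Proof. by rewrite !reduce_cat foldr_step_reduce // reduce_reduced. Qed.

Lemma reduce_cancel u a v : reduce (u ++ a :: linv a :: v) = reduce (u ++ v).
Proof. by rewrite !reduce_cat !reduce_cons reduce_stepK // reduce_reduced. Qed.

Definition winv (w : word) : word := rev (map linv w).

Lemma winv_cons a w : winv (a :: w) = winv w ++ [:: linv a].
Proof. by rewrite /winv map_cons rev_cons cats1. Qed.

Lemma winvK : involutive winv.
Proof. by move=> w; rewrite /winv map_rev revK -map_comp (eq_map linvK) map_id. Qed.

Lemma reduce_invl u v : reduce (winv u ++ u ++ v) = reduce v.
Proof.
elim: u v => //= a u IH v.
by rewrite winv_cons -catA /= -{2}[a]linvK reduce_cancel IH.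
Qed.

Lemma reduce_invr u v : reduce (u ++ winv u ++ v) = reduce v.
Proof. by rewrite -{1}(winvK u) reduce_invl. Qed.

Lemma reduce_catr0 u v : reduce v = [::] -> reduce (u ++ v) = reduce u.
Proof. by move=> v0; rewrite reduce_cat v0 -[in RHS](cats0 u) reduce_cat. Qed.

Lemma reduce_invr0 u : reduce (u ++ winv u) = [::].
Proof. by rewrite -[_ ++ _]cats0 -catA reduce_invr. Qed.

Lemma reduce_invl0 u : reduce (winv u ++ u) = [::].
Proof. by rewrite -{2}(winvK u) reduce_invr0. Qed.

Lemma reduce_cat_eql u v w :
  reduced w -> (reduce (u ++ v) == w) = (reduce v == reduce (winv u ++ w)).
Proof.
move=> rw; apply/eqP/eqP => [<- | E].
  by rewrite reduce_catr reduce_invl.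
by rewrite -reduce_catr E reduce_catr reduce_invr reduce_id.
Qed.

Lemma reduce_cat_eqr u v w :
  reduced w -> (reduce (u ++ v) == w) = (reduce u == reduce (w ++ winv v)).
Proof.
move=> rw; apply/eqP/eqP => [<- | E].
  by rewrite reduce_catl -catA reduce_catr0 ?reduce_invr0.
by rewrite -reduce_catl E reduce_catl -catA reduce_catr0 ?reduce_invl0 ?reduce_id.
Qed.

Lemma coef_nil w : coef [::] w = 0.
Proof. by rewrite /coef big_nil. Qed.

Lemma coef_cons t p w :
  coef (t :: p) w = (if reduce t.2 == w then t.1 else 0) + coef p w.
Proof. by rewrite /coef big_cons; case: ifP; rewrite ?add0r. Qed.

Lemma coef_cat p q w : coef (p ++ q) w = coef p w + coef q w.
Proof. by rewrite /coef big_cat. Qed.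

Lemma coef_unreduced p w : ~~ reduced w -> coef p w = 0.
Proof.
by move=> nrw; rewrite /coef big1 // => t /eqP rt; rewrite -rt reduce_reduced in nrw.
Qed.

Definition lsupp (p : lpoly) : seq word := [seq reduce t.2 | t <- p].

Lemma coef_notin_lsupp p w : w \notin lsupp p -> coef p w = 0.
Proof.
move=> nw; rewrite /coef big1_seq // => t /andP[/eqP rt tp].
by rewrite -rt (map_f (fun t : int * word => reduce t.2) tp) in nw.
Qed.

Definition lneg (p : lpoly) : lpoly := [seq (- t.1, t.2) | t <- p].

Lemma coef_lneg p w : coef (lneg p) w = - coef p w.
Proof.
elim: p => [|t p IH]; first by rewrite coef_nil oppr0.
by rewrite /= !coef_cons IH opprD; case: ifP; rewrite ?oppr0.
Qed.

Lemma coef_lmul p q w : coef (lmul p q) w =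
  \sum_(a <- p) \sum_(b <- q) (if reduce (a.2 ++ b.2) == w then a.1 * b.1 else 0).
Proof. by rewrite /coef big_mkcond /lmul big_allpairs_dep. Qed.

Lemma coef_lmul_reducedl p q w : reduced w ->
  coef (lmul p q) w = \sum_(a <- p) a.1 * coef q (reduce (winv a.2 ++ w)).
Proof.
move=> rw; rewrite coef_lmul; apply: eq_bigr => a _.
rewrite /coef mulr_sumr [RHS]big_mkcond; apply: eq_bigr => b _.
by rewrite reduce_cat_eql //; case: ifP; rewrite ?mulr0.
Qed.

Lemma coef_lmul_reducedr p q w : reduced w ->
  coef (lmul p q) w = \sum_(b <- q) coef p (reduce (w ++ winv b.2)) * b.1.
Proof.
move=> rw; rewrite coef_lmul exchange_big; apply: eq_bigr => b _.
rewrite /coef mulr_suml [RHS]big_mkcond; apply: eq_bigr => a _.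
by rewrite reduce_cat_eqr //; case: ifP; rewrite ?mul0r.
Qed.

Lemma coef_lmul_lmono p u w : reduced w ->
  coef (lmul p (lmono u)) w = coef p (reduce (w ++ winv u)).
Proof. by move=> rw; rewrite coef_lmul_reducedr // big_seq1 mulr1. Qed.

Lemma coef_lmono_lmul u p w : reduced w ->
  coef (lmul (lmono u) p) w = coef p (reduce (winv u ++ w)).
Proof. by move=> rw; rewrite coef_lmul_reducedl // big_seq1 mul1r. Qed.

Lemma lpeq_sym p q : lpeq p q -> lpeq q p.
Proof. by move=> E w; rewrite E. Qed.

Lemma lpeq_trans p q r : lpeq p q -> lpeq q r -> lpeq p r.
Proof. by move=> E1 E2 w; rewrite E1 E2. Qed.

Lemma ladd_congr p p' q q' : lpeq p p' -> lpeq q q' -> lpeq (ladd p q) (ladd p' q').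
Proof. by move=> E1 E2 w; rewrite /ladd !coef_cat E1 E2. Qed.

Lemma lneg_congr p p' : lpeq p p' -> lpeq (lneg p) (lneg p').
Proof. by move=> E w; rewrite !coef_lneg E. Qed.

Lemma lmul_congr p p' q q' : lpeq p p' -> lpeq q q' -> lpeq (lmul p q) (lmul p' q').
Proof.
move=> Ep Eq w; have [rw | nrw] := boolP (reduced w); last by rewrite !coef_unreduced.
transitivity (coef (lmul p q') w).
  by rewrite !coef_lmul_reducedl //; apply: eq_bigr => a _; rewrite Eq.
by rewrite !coef_lmul_reducedr //; apply: eq_bigr => b _; rewrite Ep.
Qed.

Lemma lmulA p q r : lpeq (lmul (lmul p q) r) (lmul p (lmul q r)).
Proof.
move=> w; rewrite !coef_lmul /lmul big_allpairs_dep; apply: eq_bigr => a _.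
rewrite big_allpairs_dep; apply: eq_bigr => b _.
by apply: eq_bigr => c _; rewrite /= catA mulrA.
Qed.

Lemma lmulDl p q r : lpeq (lmul (ladd p q) r) (ladd (lmul p r) (lmul q r)).
Proof. by move=> w; rewrite /ladd coef_cat !coef_lmul big_cat. Qed.

Lemma lmulDr p q r : lpeq (lmul p (ladd q r)) (ladd (lmul p q) (lmul p r)).
Proof.
move=> w; rewrite /ladd coef_cat !coef_lmul -big_split.
by apply: eq_bigr => a _; rewrite big_cat.
Qed.

Lemma lmul1 p : lpeq (lmul lone p) p.
Proof.
move=> w; rewrite coef_lmul big_seq1 /coef [RHS]big_mkcond.
by apply: eq_bigr => b _; rewrite mul1r.
Qed.

Lemma lmulr1 p : lpeq (lmul p lone) p.
Proof.
move=> w; rewrite coef_lmul /coef [RHS]big_mkcond.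
by apply: eq_bigr => a _; rewrite big_seq1 cats0 mulr1.
Qed.

Definition pickle_le (u v : word) : bool := (pickle u <= pickle v)%N.

Lemma pickle_le_total : total pickle_le.
Proof. by move=> u v; apply: leq_total. Qed.

Lemma pickle_le_trans : transitive pickle_le.
Proof. by move=> u v w; apply: leq_trans. Qed.

Lemma pickle_le_anti : antisymmetric pickle_le.
Proof. by move=> u v /anti_leq /(pcan_inj pickleK_inv). Qed.

(* Sorted so that [lpeq p q] implies [support p = support q]. *)
Definition support (p : lpoly) : seq word :=
  sort pickle_le [seq w <- undup (lsupp p) | coef p w != 0].

Lemma mem_support p w : (w \in support p) = (coef p w != 0).
Proof.
rewrite mem_sort mem_filter mem_undup andb_idr //.
by apply: contraR => /coef_notin_lsupp ->; rewrite eqxx.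
Qed.

Lemma support_uniq p : uniq (support p).
Proof. by rewrite sort_uniq filter_uniq // undup_uniq. Qed.

Lemma support_reduced p w : w \in support p -> reduced w.
Proof.
by rewrite mem_sort mem_filter mem_undup => /andP[_ /mapP[t _ ->]]; apply: reduce_reduced.
Qed.

Lemma support_lpeq p q : lpeq p q -> support p = support q.
Proof.
move=> E; apply/(perm_sortP pickle_le_total pickle_le_trans pickle_le_anti).
apply: uniq_perm; rewrite ?filter_uniq ?undup_uniq // => w.
by have := mem_support p w; have := mem_support q w; rewrite !mem_sort E => -> ->.
Qed.

Definition canon (p : lpoly) : lpoly := [seq (coef p w, w) | w <- support p].

Lemma canon_lpeq p q : lpeq p q -> canon p = canon q.
Proof. by move=> E; rewrite /canon (support_lpeq E); apply: eq_map => w; rewrite E. Qed.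

Lemma coef_canon p : lpeq (canon p) p.
Proof.
move=> w; rewrite /coef big_map big_mkcond /=.
under eq_big_seq => u /support_reduced/reduce_id-> do [].
have [wp | wNp] := boolP (w \in support p).
  by rewrite -big_mkcond -big_filter filter_pred1_uniq ?support_uniq // big_seq1.
rewrite big1_seq => [|u /andP[_ up]]; last by case: eqP up wNp => // ->->.
by move: wNp; rewrite mem_support negbK => /eqP.
Qed.

Lemma canon_idem p : canon (canon p) == canon p.
Proof. exact/eqP/canon_lpeq/coef_canon. Qed.

(* [lpoly] modulo [lpeq], realised by canonical representatives. *)
Record laurent := Laurent { lrepr : lpoly; _ : canon lrepr == lrepr }.
HB.instance Definition _ := [isSub for lrepr].
HB.instance Definition _ := [Choice of laurent by <:].

Definition lclass (p : lpoly) : laurent := Laurent (canon_idem p).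

Lemma lrepr_lclass p : lpeq (lrepr (lclass p)) p.
Proof. exact: coef_canon. Qed.

Lemma lrepr_inj_lpeq (x y : laurent) : lpeq (lrepr x) (lrepr y) -> x = y.
Proof.
case: x y => [p cp] [q cq] /= E; apply: val_inj => /=.
by rewrite -(eqP cp) -(eqP cq); apply: canon_lpeq.
Qed.

Lemma lclass_eqP p q : lclass p = lclass q <-> lpeq p q.
Proof.
split=> [E | E]; last by apply: lrepr_inj_lpeq => w; rewrite !lrepr_lclass.
by move=> w; rewrite -(lrepr_lclass p w) -(lrepr_lclass q w) E.
Qed.

Lemma lreprK (x : laurent) : lclass (lrepr x) = x.
Proof. exact/lrepr_inj_lpeq/lrepr_lclass. Qed.

Definition laurent_add (x y : laurent) := lclass (ladd (lrepr x) (lrepr y)).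
Definition laurent_opp (x : laurent) := lclass (lneg (lrepr x)).
Definition laurent_mul (x y : laurent) := lclass (lmul (lrepr x) (lrepr y)).

Lemma lclass_add p q : lclass (ladd p q) = laurent_add (lclass p) (lclass q).
Proof. by apply/lclass_eqP/ladd_congr; apply/lpeq_sym/lrepr_lclass. Qed.

Lemma lclass_opp p : lclass (lneg p) = laurent_opp (lclass p).
Proof. by apply/lclass_eqP/lneg_congr/lpeq_sym/lrepr_lclass. Qed.

Lemma lclass_mul p q : lclass (lmul p q) = laurent_mul (lclass p) (lclass q).
Proof. by apply/lclass_eqP/lmul_congr; apply/lpeq_sym/lrepr_lclass. Qed.

Lemma laurent_ind (P : laurent -> Prop) : (forall p, P (lclass p)) -> forall x, P x.
Proof. by move=> Pp x; rewrite -(lreprK x). Qed.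

Lemma laurent_addA : associative laurent_add.
Proof.
elim/laurent_ind=> p; elim/laurent_ind=> q; elim/laurent_ind=> r.
by rewrite -!lclass_add /ladd catA.
Qed.

Lemma laurent_addC : commutative laurent_add.
Proof.
elim/laurent_ind=> p; elim/laurent_ind=> q; rewrite -!lclass_add.
by apply/lclass_eqP => w; rewrite !coef_cat addrC.
Qed.

Lemma laurent_add0 : left_id (lclass [::]) laurent_add.
Proof. by move=> x; elim/laurent_ind: x => p; rewrite -lclass_add. Qed.

Lemma laurent_addN : left_inverse (lclass [::]) laurent_opp laurent_add.
Proof.
move=> x; elim/laurent_ind: x => p; rewrite -lclass_opp -lclass_add.
by apply/lclass_eqP => w; rewrite coef_cat coef_lneg coef_nil addNr.
Qed.

Lemma laurent_mulA : associative laurent_mul.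
Proof.
elim/laurent_ind=> p; elim/laurent_ind=> q; elim/laurent_ind=> r.
by rewrite -!lclass_mul; apply/lclass_eqP/lpeq_sym/lmulA.
Qed.

Lemma laurent_mul1 : left_id (lclass lone) laurent_mul.
Proof. by move=> x; elim/laurent_ind: x => p; rewrite -lclass_mul; apply/lclass_eqP/lmul1. Qed.

Lemma laurent_mulr1 : right_id (lclass lone) laurent_mul.
Proof. by move=> x; elim/laurent_ind: x => p; rewrite -lclass_mul; apply/lclass_eqP/lmulr1. Qed.

Lemma laurent_mulDl : left_distributive laurent_mul laurent_add.
Proof.
elim/laurent_ind=> p; elim/laurent_ind=> q; elim/laurent_ind=> r.
rewrite -!lclass_add -!lclass_mul; apply/lclass_eqP/(lpeq_trans (lmulDl _ _ _)).
by apply: ladd_congr; apply: lmul_congr; apply/lpeq_sym/lrepr_lclass.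
Qed.

Lemma laurent_mulDr : right_distributive laurent_mul laurent_add.
Proof.
elim/laurent_ind=> p; elim/laurent_ind=> q; elim/laurent_ind=> r.
rewrite -!lclass_add -!lclass_mul; apply/lclass_eqP/(lpeq_trans (lmulDr _ _ _)).
by apply: ladd_congr; apply: lmul_congr; apply/lpeq_sym/lrepr_lclass.
Qed.

HB.instance Definition _ := GRing.isPzRing.Build laurent
  laurent_addA laurent_addC laurent_add0 laurent_addN
  laurent_mulA laurent_mul1 laurent_mulr1 laurent_mulDl laurent_mulDr.

Lemma lclassD p q : lclass (ladd p q) = lclass p + lclass q.
Proof. exact: lclass_add. Qed.

Lemma lclassN p : lclass (lneg p) = - lclass p.
Proof. exact: lclass_opp. Qed.

Lemma lclassM p q : lclass (lmul p q) = lclass p * lclass q.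
Proof. exact: lclass_mul. Qed.

Lemma lreprM x y : lpeq (lrepr (x * y)) (lmul (lrepr x) (lrepr y)).
Proof. exact: lrepr_lclass. Qed.

Fixpoint pathw_to (h e : nat) (p : seq bool) : option word :=
  match p with
  | [::] => if h == e then Some [::] else None
  | true :: p' => if (h < 3)%N then pathw_to h.+1 e p' else None
  | false :: p' =>
      if h == 0%N then None
      else if pathw_to h.-1 e p' is Some u then Some (ywt h ++ u) else None
  end.

Lemma pathw_to0 h p : pathw h p = pathw_to h 0 p.
Proof. by elim: p h => [|[] p IH] h //=; rewrite IH. Qed.

Fixpoint bool_seqs (m : nat) : seq (seq bool) :=
  if m is m'.+1
  then [seq true :: p | p <- bool_seqs m'] ++ [seq false :: p | p <- bool_seqs m']
  else [:: [::]].

Lemma mem_bool_seqs m p : (p \in bool_seqs m) = (size p == m).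
Proof.
elim: m p => [|m IH] [|b p] //=; rewrite mem_cat.
  by apply/negbTE; rewrite negb_or; apply/andP; split; apply/mapP => -[].
by rewrite !mem_cons_map IH; case: b; rewrite /= ?orbF.
Qed.

Lemma uniq_bool_seqs m : uniq (bool_seqs m).
Proof.
have cons_inj (b : bool) : injective (cons b) by move=> p q [].
elim: m => //= m IH; rewrite cat_uniq !map_inj_uniq // IH andbT.
by apply/hasPn => _ /mapP[p _ ->]; rewrite mem_cons_map.
Qed.

Definition paths_poly (h e m : nat) : lpoly :=
  [seq (1, u) | u <- pmap (pathw_to h e) (bool_seqs m)].

Definition weighs (h e : nat) (w : word) (p : seq bool) : bool :=
  if pathw_to h e p is Some u then reduce u == w else false.

Lemma coef_paths_poly h e m w :
  coef (paths_poly h e m) w = (count (weighs h e w) (bool_seqs m))%:R.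
Proof.
rewrite /paths_poly; elim: (bool_seqs m) => [|p s IH]; first exact: coef_nil.
rewrite /= /weighs; case: (pathw_to h e p) => [u|] //=.
by rewrite coef_cons IH natrD; case: ifP; rewrite ?add0r.
Qed.

Lemma pmap_pathw_to_up h e s :
  pmap (pathw_to h e) [seq true :: p | p <- s] =
  if (h < 3)%N then pmap (pathw_to h.+1 e) s else [::].
Proof. by case: ifP => h3; elim: s => //= p s ->; rewrite h3. Qed.

Lemma pmap_pathw_to_down h e s :
  pmap (pathw_to h e) [seq false :: p | p <- s] =
  if h == 0%N then [::] else map (cat (ywt h)) (pmap (pathw_to h.-1 e) s).
Proof.
by case: ifP => h0; elim: s => //= p s ->; rewrite h0 //; case: pathw_to.
Qed.

Lemma lmul_lmono u q : lmul (lmono u) q = [seq (1 * t.1, u ++ t.2) | t <- q].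
Proof. by rewrite /lmul /= cats0. Qed.

Lemma paths_poly_step h e m :
  lpeq (paths_poly h e m.+1)
       (ladd (if (h < 3)%N then paths_poly h.+1 e m else [::])
             (if h == 0%N then [::] else lmul (lmono (ywt h)) (paths_poly h.-1 e m))).
Proof.
rewrite /paths_poly /= pmap_cat map_cat pmap_pathw_to_up pmap_pathw_to_down.
apply: ladd_congr => w; first by case: ifP.
case: ifP => // _; rewrite lmul_lmono.
by elim: (pmap _ _) => //= u s; rewrite !coef_cons mul1r => ->.
Qed.

Fixpoint down_heights (h : nat) (p : seq bool) : seq nat :=
  match p with
  | [::] => [::]
  | true :: p' => down_heights h.+1 p'
  | false :: p' => h :: down_heights h.-1 p'
  end.

Lemma pathw_to_down_heights h e p u :
  pathw_to h e p = Some u -> u = flatten (map ywt (down_heights h p)).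
Proof.
elim: p h u => [|[] p IH] h u /=.
- by case: eqP => // _ [<-].
- by case: ifP => // _; apply: IH.
- case: eqP => // _; case E: (pathw_to h.-1 e p) => [v|] // [<-].
  by rewrite (IH _ _ E).
Qed.

Definition ylabel : pred nat := fun i => (0 < i <= 3)%N.

Lemma down_heights_ylabel h e p u :
  (h <= 3)%N -> pathw_to h e p = Some u -> all ylabel (down_heights h p).
Proof.
elim: p h u => [|[] p IH] h u //= h3.
- by case: ifP => // h3'; apply: IH.
- case: eqP => // /eqP h0; case E: (pathw_to h.-1 e p) => [v|] // _.
  by rewrite /ylabel lt0n h0 h3 (IH _ _ _ E) // (leq_trans (leq_pred h)).
Qed.

Lemma down_heights_head_ge h p d s : down_heights h p = d :: s -> (h <= d)%N.
Proof.
elim: p h => [|[] p IH] h //=; first by move/IH/ltnW.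
by case=> ->.
Qed.

Lemma pathw_to_up_only h e p u :
  pathw_to h e p = Some u -> down_heights h p = [::] -> e = (h + size p)%N.
Proof.
elim: p h u => [|[] p IH] h u /=.
- by case: eqP => // -> _ _; rewrite addn0.
- by case: ifP => // _ /IH /[apply] ->; rewrite addSnnS.
- by case: eqP.
Qed.

Lemma down_heights_inj h e p q u v :
  pathw_to h e p = Some u -> pathw_to h e q = Some v ->
  down_heights h p = down_heights h q -> p = q.
Proof.
have up_only_nil h' p' u' : pathw_to h' e p' = Some u' -> pathw_to h' e [::] ->
    down_heights h' p' = [::] -> p' = [::].
  move=> Hp /= Hnil /(pathw_to_up_only Hp); move: Hnil; case: eqP => // -> _.
  by move/eqP; rewrite -{1}(addn0 e) eqn_add2l eq_sym size_eq0 => /eqP.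
elim: p h q u v => [|b p IH] h q u v Hp Hq Hd.
  by apply/esym/(up_only_nil _ _ _ Hq); rewrite ?Hp.
case: q Hq Hd => [|c q] Hq Hd; first by apply: (up_only_nil _ _ _ Hp); rewrite ?Hq.
move: Hp Hq Hd; case: b; case: c => /= Hp Hq Hd.
- case: ifP Hp Hq => // _ Hp Hq; by rewrite (IH _ _ _ _ Hp Hq Hd).
- by have := down_heights_head_ge Hd; rewrite ltnn.
- by have := down_heights_head_ge (esym Hd); rewrite ltnn.
- case: eqP Hp Hq => // _; case Ep: (pathw_to h.-1 e p) => [u1|] // _.
  case Eq: (pathw_to h.-1 e q) => [v1|] // _.
  by case: Hd => Hd; rewrite (IH _ _ _ _ Ep Eq Hd).
Qed.

Definition ywt_word (s : seq nat) : word := reduce (flatten (map ywt s)).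

Lemma ywt_word_cons i s : ywt_word (i :: s) = reduce (ywt i ++ ywt_word s).
Proof. by rewrite /ywt_word /= reduce_catr. Qed.

(* [ywt i = ywt_prefix i ++ [:: y^-1]]; in a product of [y_i]'s at most the final [y^-1]
   of a factor cancels, so the reduced word starts with [ywt_prefix] of the first label. *)
Definition ywt_prefix (i : nat) : word :=
  match i with 1 => [:: Ly; Ly; Lxi] | 2 => [:: Lxi] | _ => [:: Lx] end.

Lemma ywt_prefixE i : ylabel i -> ywt i = ywt_prefix i ++ [:: Lyi].
Proof. by case: i => [|[|[|[|i]]]]. Qed.

Lemma ywt_word_prefix i s :
  all ylabel (i :: s) -> exists r, ywt_word (i :: s) = ywt_prefix i ++ r.
Proof.
elim: s i => [|j s IH] i /=.
  by rewrite andbT; case: i => [|[|[|[|i]]]] // _; eexists.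
case/and3P=> li lj ls; have [r Er] := IH j (introT andP (conj lj ls)).
have := reduce_reduced (flatten (map ywt (j :: s))); rewrite -/(ywt_word _) Er => rr.
rewrite ywt_word_cons Er (ywt_prefixE li) -catA /=.
case: j lj Er rr => [|[|[|[|j]]]] // _ _ rr.
- exists [:: Ly, Lxi & r]; rewrite (reduce_cancel (ywt_prefix i) Lyi [:: Ly, Lxi & r]).
  by apply: reduce_id; case: i li => [|[|[|[|i]]]] // _; rewrite /reduced /= in rr *; rewrite rr.
- exists (Lyi :: ywt_prefix 2 ++ r); apply: reduce_id; move: rr; rewrite /reduced /=.
  by case: i li => [|[|[|[|i]]]] //= _ ->.
- exists (Lyi :: ywt_prefix 3 ++ r); apply: reduce_id; move: rr; rewrite /reduced /=.
  by case: i li => [|[|[|[|i]]]] //= _ ->.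
Qed.

Lemma ywt_word_inj s t : all ylabel s -> all ylabel t -> ywt_word s = ywt_word t -> s = t.
Proof.
elim: s t => [|i s IH] [|j t] //.
- by move=> _ /ywt_word_prefix[r ->]; case: j => [|[|[|[|j]]]].
- by move=> /ywt_word_prefix[r ->]; case: i => [|[|[|[|i]]]].
move=> ls lt E; have eij : i = j.
  have [r1 E1] := ywt_word_prefix ls; have [r2 E2] := ywt_word_prefix lt.
  move: E ls lt; rewrite E1 E2 => /= E /andP[li _] /andP[lj _].
  by case: i li E {E1} => [|[|[|[|i]]]] //; case: j lj {E2} => [|[|[|[|j]]]].
subst j; move: ls lt => /andP[_ ls] /andP[_ lt]; congr (_ :: _); apply: IH => //.
have := congr1 (fun x => reduce (winv (ywt i) ++ x)) E.
by rewrite /= !ywt_word_cons !reduce_catr !reduce_invl !reduceK.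
Qed.

Lemma pathw_to_inj h e p q u v : (h <= 3)%N ->
  pathw_to h e p = Some u -> pathw_to h e q = Some v -> reduce u = reduce v -> p = q.
Proof.
move=> h3 Hp Hq E; apply: (down_heights_inj Hp Hq); apply: ywt_word_inj.
- exact: down_heights_ylabel Hp.
- exact: down_heights_ylabel Hq.
by move: E; rewrite /ywt_word -(pathw_to_down_heights Hp) -(pathw_to_down_heights Hq).
Qed.

Lemma weighs_inj h e w p q : (h <= 3)%N -> weighs h e w p -> weighs h e w q -> p = q.
Proof.
rewrite /weighs => h3; case Ep: pathw_to => [u|] //; case Eq: pathw_to => [v|] // /eqP Eu /eqP Ev.
by apply: pathw_to_inj h3 Ep Eq _; rewrite Eu Ev.
Qed.

Lemma coef_paths_poly01 h e m w : (h <= 3)%N ->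
  coef (paths_poly h e m) w = 0 \/ coef (paths_poly h e m) w = 1.
Proof.
move=> h3; rewrite coef_paths_poly.
have := count_le1_uniq (uniq_bool_seqs m) (fun p q => @weighs_inj h e w p q h3).
by case: count => [|[|]] //; [left | right].
Qed.

Lemma coef_paths_poly_unique h e m w : (h <= 3)%N -> coef (paths_poly h e m) w != 0 ->
  exists! p, size p = m /\ exists u, pathw_to h e p = Some u /\ reduce u = w.
Proof.
move=> h3; rewrite coef_paths_poly pnatr_eq0 -lt0n -has_count => /hasP[p pm wp].
exists p; split=> [|q [_ [v [Eq Ev]]]].
  split; first by move: pm; rewrite mem_bool_seqs => /eqP.
  by move: wp; rewrite /weighs; case: pathw_to => [u /eqP|] //; exists u.
by apply: weighs_inj h3 wp _; rewrite /weighs Eq Ev.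
Qed.

Lemma coef_paths_poly_pathw m w : coef (paths_poly 0 0 m) w != 0 ->
  exists! p, size p = m /\ exists u, pathw 0 p = Some u /\ reduce u = w.
Proof.
case/(coef_paths_poly_unique (leq0n 3)) => p [Pp p_uniq].
by exists p; split=> [|q]; rewrite pathw_to0 //; apply: p_uniq.
Qed.

Section CoupledRecurrence.

Variables (R : pzRingType) (a b : nat -> R) (y1 y2 y3 : R).
Hypothesis rec_a : forall n, a n.+1 = b n + y1 * a n.
Hypothesis rec_b : forall n, b n.+1 = y3 * b n + y2 * (b n + y1 * a n).

Lemma coupled_rec_a n : a n.+2 = (y1 + y2 + y3) * a n.+1 - y3 * y1 * a n.
Proof.
have bn : b n = a n.+1 - y1 * a n by rewrite rec_a addrK.
rewrite rec_a rec_b -rec_a bn mulrBr !mulrA !mulrDl.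
by rewrite addrC addrA addrC !addrA; congr (_ + _ - _); apply: addrC.
Qed.

Lemma coupled_rec_b z2 : z2 * y2 = 1 -> forall n,
  b n.+2 = (y2 + y3 + y2 * y1 * z2) * b n.+1 - y2 * y1 * z2 * y3 * b n.
Proof.
move=> z2y2 n.
have cancel3 (x y z : R) : x + (y + z) - x - y = z.
  by rewrite [x + _]addrC addrK addrC addKr.
have y1an : y1 * a n = z2 * (b n.+1 - y3 * b n - y2 * b n).
  by rewrite rec_b [y2 * (_ + _)]mulrDr cancel3 mulrA z2y2 mul1r.
rewrite {1}rec_b [y2 * (_ + _)]mulrDr rec_a [y1 * (_ + _)]mulrDr y1an mulrDr.
rewrite !mulrBr !mulrA -[y2 * y1 * z2 * y2]mulrA z2y2 mulr1 !mulrDl.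
set u := y3 * b n.+1; set v := y2 * b n.+1; set w := y2 * y1 * b n.
by rewrite [w + _]addrC subrK addrA [u + v]addrC !addrA.
Qed.

End CoupledRecurrence.

Section LinearRecurrence.

Variables (R : pzRingType) (K C Ci : R).
Hypothesis CiC : Ci * C = 1.

Lemma left_rec_eq0 (e : int -> R) : (forall n, e (n + 1) = K * e n - C * e (n - 1)) ->
  e 0 = 0 -> e 1 = 0 -> forall n, e n = 0.
Proof.
move=> left_rec e0 e1.
suff /(_ _)/proj1 : forall n, e n = 0 /\ e (n + 1) = 0 by [].
apply: int_ind_succ_pred => [//|n [en en1]|n [en en1]].
  by split=> //; rewrite left_rec addrK en1 en !mulr0 subrr.
split; last by rewrite subrK.
have := left_rec n; rewrite en en1 mulr0 sub0r => /esym/eqP.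
by rewrite oppr_eq0 => /eqP /(congr1 (GRing.mul Ci)); rewrite mulrA CiC mul1r mulr0.
Qed.

Variables (r : int -> R) (K' : R).
Hypothesis left_rec : forall n, r (n + 1) = K * r n - C * r (n - 1).

Lemma right_rec_of_left_rec :
  r 1 - r 0 * K' + r (-1) * Ci = 0 -> r 2 - r 1 * K' + r 0 * Ci = 0 ->
  forall n, r (n + 1) = r n * K' - r (n - 1) * Ci.
Proof.
move=> E0 E1 n; pose E n := r (n + 1) - r n * K' + r (n - 1) * Ci.
have E_rec m : E (m + 1) = K * E m - C * E (m - 1).
  have regroup (a b c d e f : R) :
      (a - b + c) - (d - e + f) = (a - d) - (b - e) + (c - f).
    by rewrite [- (_ + f)]opprD addrACA; congr (_ + _); rewrite !opprD !opprK addrACA.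
  rewrite /E addrK subrK !mulrDr !mulrN regroup.
  have := left_rec (m + 1); rewrite addrK => ->.
  have := left_rec (m - 1); rewrite subrK => rm.
  by congr (_ - _ + _); rewrite ?left_rec ?rm mulrBl !mulrA.
have /eqP := left_rec_eq0 E_rec E0 E1 n.
by rewrite /E -addrA addr_eq0 opprD opprK addrC => /eqP.
Qed.

Hypothesis K'C : K' * C = K.
Hypothesis right_rec : forall n, r (n + 1) = r n * K' - r (n - 1) * Ci.

Lemma frieze_rel_of_recs : r 1 * C * r (-1) = r 0 * r 0 + 1 ->
  forall n, r (n + 1) * C * r (n - 1) = r n * r n + 1.
Proof.
move=> D0; pose D n := r (n + 1) * C * r (n - 1) - r n * r n.
have DS n : D (n + 1) = D n.
  rewrite /D addrK (right_rec (n + 1)) addrK mulrBl.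
  rewrite -(mulrA _ K' C) K'C -(mulrA _ Ci C) CiC mulr1 mulrBl -(mulrA _ K).
  have -> : K * r n = r (n + 1) + C * r (n - 1) by rewrite left_rec subrK.
  rewrite mulrDr mulrA; set a := r (n + 1) * r (n + 1); set b := r (n + 1) * C * r (n - 1).
  by rewrite addrAC [a + b - a]addrAC subrr add0r.
have D1 : forall n, D n = 1.
  apply: int_ind_succ_pred => [|n Dn|n Dn].
  - by rewrite /D add0r sub0r D0 addrAC subrr add0r.
  - by rewrite DS.
  - by rewrite -Dn -{2}(subrK 1 n) DS.
by move=> n; have /eqP := D1 n; rewrite subr_eq => /eqP ->; rewrite addrC.
Qed.

End LinearRecurrence.

(* Unlike [coef], whose big operator is locked, [coefc] evaluates by [vm_compute]. *)
Definition coefc (p : lpoly) (w : word) : int :=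
  foldr (fun t acc => (if reduce t.2 == w then t.1 else 0) + acc) 0 p.

Lemma coefcE p w : coef p w = coefc p w.
Proof. by elim: p => [|t p IH]; rewrite ?coef_nil // coef_cons IH. Qed.

Definition lpeqb (p q : lpoly) : bool :=
  all (fun w => coefc p w == coefc q w) (lsupp p ++ lsupp q).

Lemma lpeqbP p q : lpeqb p q -> lpeq p q.
Proof.
move=> /allP pq w; have [wpq | ] := boolP (w \in lsupp p ++ lsupp q).
  by rewrite !coefcE; apply/eqP/pq.
by rewrite mem_cat negb_or => /andP[wp wq]; rewrite !coef_notin_lsupp.
Qed.

Inductive lexpr :=
| LLeaf of lpoly | LAdd of lexpr & lexpr | LMul of lexpr & lexpr | LOpp of lexpr
| LOne | LZero.

Fixpoint lexpr_eval (e : lexpr) : laurent :=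
  match e with
  | LLeaf p => lclass p
  | LAdd a b => lexpr_eval a + lexpr_eval b
  | LMul a b => lexpr_eval a * lexpr_eval b
  | LOpp a => - lexpr_eval a
  | LOne => 1
  | LZero => 0
  end.

Fixpoint lexpr_poly (e : lexpr) : lpoly :=
  match e with
  | LLeaf p => p
  | LAdd a b => ladd (lexpr_poly a) (lexpr_poly b)
  | LMul a b => lmul (lexpr_poly a) (lexpr_poly b)
  | LOpp a => lneg (lexpr_poly a)
  | LOne => lone
  | LZero => [::]
  end.

Lemma lexpr_evalE e : lexpr_eval e = lclass (lexpr_poly e).
Proof.
elim: e => [p|a IHa b IHb|a IHa b IHb|a IHa||] //=.
- by rewrite lclassD IHa IHb.
- by rewrite lclassM IHa IHb.
- by rewrite lclassN IHa.
Qed.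

Ltac reify_laurent t :=
  match t with
  | (?a + ?b)%R => let x := reify_laurent a in let y := reify_laurent b in constr:(LAdd x y)
  | (?a * ?b)%R => let x := reify_laurent a in let y := reify_laurent b in constr:(LMul x y)
  | (- ?a)%R => let x := reify_laurent a in constr:(LOpp x)
  | 1%R => constr:(LOne)
  | 0%R => constr:(LZero)
  | lclass ?p => constr:(LLeaf p)
  end.

Ltac laurent_compute :=
  match goal with |- ?l = ?r =>
    let el := reify_laurent l in let er := reify_laurent r in
    change (lexpr_eval el = lexpr_eval er) end;
  rewrite !lexpr_evalE; apply/lclass_eqP/lpeqbP; vm_compute; reflexivity.

Definition lmon (w : word) : laurent := lclass (lmono w).
Definition ymon (i : nat) : laurent := lmon (ywt i).
Definition Cmon : laurent := lmon wC.
Definition Cinv : laurent := lmon [:: Ly; Lx; Lyi; Lxi].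
Definition R0mon : laurent := lmon wR0.
Definition y2inv : laurent := lmon [:: Ly; Lx].
Definition ysum : laurent := ymon 1 + ymon 2 + ymon 3.
Definition ysum_Cinv : laurent :=
  lclass [:: (1, [:: Lyi; Lxi]); (1, [:: Ly; Lxi]); (1, [:: Lx; Lx; Lyi; Lxi])].

Ltac unfold_monomials := rewrite /ysum /ysum_Cinv /y2inv /R0mon /Cinv /Cmon /ymon /lmon.

Lemma y3y1 : ymon 3 * ymon 1 = Cmon.
Proof. unfold_monomials; laurent_compute. Qed.

Lemma y2invK : y2inv * ymon 2 = 1.
Proof. unfold_monomials; laurent_compute. Qed.

Lemma CinvK : Cinv * Cmon = 1.
Proof. unfold_monomials; laurent_compute. Qed.

Lemma ysum_CinvK : ysum_Cinv * Cmon = ysum.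
Proof. unfold_monomials; laurent_compute. Qed.

(* These carry the recurrence of [pathsl 2 2] across [R_0] to the [R_n] with [n < 0]. *)
Lemma R0_intertwine_ysum :
  Cmon * R0mon * (ymon 2 + ymon 3 + ymon 2 * ymon 1 * y2inv) = ysum * R0mon.
Proof. unfold_monomials; laurent_compute. Qed.

Lemma R0_intertwine_C : Cmon * R0mon * ymon 2 * ymon 1 * y2inv * ymon 3 = R0mon.
Proof. unfold_monomials; laurent_compute. Qed.

Definition pathsl (h e m : nat) : laurent := lclass (paths_poly h e m).

Lemma pathsl_nil e : pathsl e e 0 = 1.
Proof. by rewrite /pathsl /paths_poly /= eqxx. Qed.

Lemma pathsl_step h e m : pathsl h e m.+1 =
  (if (h < 3)%N then pathsl h.+1 e m else 0) +
  (if h == 0%N then 0 else ymon h * pathsl h.-1 e m).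
Proof.
rewrite /pathsl (proj2 (lclass_eqP _ _) (paths_poly_step h e m)) lclassD.
by congr (_ + _); case: ifP => //; rewrite lclassM.
Qed.

Lemma pathsl_step0 e n :
  pathsl 0 e n.+1.*2 = pathsl 2 e n.*2 + ymon 1 * pathsl 0 e n.*2.
Proof. by rewrite /= pathsl_step /= pathsl_step /= addr0. Qed.

Lemma pathsl_step2 e n : pathsl 2 e n.+1.*2 =
  ymon 3 * pathsl 2 e n.*2 + ymon 2 * (pathsl 2 e n.*2 + ymon 1 * pathsl 0 e n.*2).
Proof. by rewrite /= pathsl_step /= pathsl_step pathsl_step /= add0r. Qed.

Lemma pathsl00_rec n : pathsl 0 0 n.+2.*2 =
  ysum * pathsl 0 0 n.+1.*2 - Cmon * pathsl 0 0 n.*2.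
Proof.
rewrite -y3y1.
exact: (coupled_rec_a (a := fun n => pathsl 0 0 n.*2) (pathsl_step0 0) (pathsl_step2 0)).
Qed.

Lemma pathsl22_rec n : pathsl 2 2 n.+2.*2 =
  (ymon 2 + ymon 3 + ymon 2 * ymon 1 * y2inv) * pathsl 2 2 n.+1.*2
  - ymon 2 * ymon 1 * y2inv * ymon 3 * pathsl 2 2 n.*2.
Proof.
exact: (coupled_rec_b (b := fun n => pathsl 2 2 n.*2) (pathsl_step0 2) (pathsl_step2 2) y2invK).
Qed.

Definition Rl (n : int) : laurent :=
  match n with
  | Posz k => pathsl 0 0 k.*2 * R0mon
  | Negz k => R0mon * pathsl 2 2 k.+1.*2
  end.

Lemma Rl_left_rec n : Rl (n + 1) = ysum * Rl n - Cmon * Rl (n - 1).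
Proof.
case: n => [[|k]|k].
- by rewrite /Rl /pathsl /paths_poly /=; unfold_monomials; laurent_compute.
- have -> : Posz k.+1 + 1 = Posz k.+2 by lia.
  have -> : Posz k.+1 - 1 = Posz k by lia.
  by rewrite /= pathsl00_rec mulrBl !mulrA.
- have -> : Negz k - 1 = Negz k.+1 by rewrite !NegzE; lia.
  have -> : Rl (Negz k + 1) = R0mon * pathsl 2 2 k.*2.
    case: k => [|k]; first by rewrite /= pathsl_nil mul1r mulr1.
    by have -> : Negz k.+1 + 1 = Negz k by rewrite !NegzE; lia.
  rewrite /= pathsl22_rec mulrBr mulrBr !mulrA R0_intertwine_ysum R0_intertwine_C.
  by rewrite opprB addrC subrK.
Qed.

Lemma Rl_frieze n : Rl (n + 1) * Cmon * Rl (n - 1) = Rl n * Rl n + 1.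
Proof.
have [E0 E1 D0] : [/\ Rl 1 - Rl 0 * ysum_Cinv + Rl (-1) * Cinv = 0,
                      Rl 2 - Rl 1 * ysum_Cinv + Rl 0 * Cinv = 0
                    & Rl 1 * Cmon * Rl (-1) = Rl 0 * Rl 0 + 1].
  by rewrite /Rl /pathsl /paths_poly /=; unfold_monomials; split; laurent_compute.
have right_rec := right_rec_of_left_rec CinvK Rl_left_rec E0 E1.
exact: (frieze_rel_of_recs CinvK Rl_left_rec ysum_CinvK right_rec D0 n).
Qed.

Lemma Rl0 : Rl 0 = R0mon.
Proof. by rewrite /= pathsl_nil mul1r. Qed.

Lemma Rl1 : Rl 1 = lmon wR1.
Proof. rewrite /Rl /pathsl /paths_poly /=; unfold_monomials; laurent_compute. Qed.

Lemma lrepr_Rl_pos k : lpeq (lrepr (Rl (Posz k))) (lmul (paths_poly 0 0 k.*2) (lmono wR0)).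
Proof. by apply: lpeq_trans (lreprM _ _) _; apply: lmul_congr; apply: lrepr_lclass. Qed.

Lemma lrepr_Rl_neg k : lpeq (lrepr (Rl (Negz k))) (lmul (lmono wR0) (paths_poly 2 2 k.+1.*2)).
Proof. by apply: lpeq_trans (lreprM _ _) _; apply: lmul_congr; apply: lrepr_lclass. Qed.

Lemma coef_Rl01 n w : coef (lrepr (Rl n)) w = 0 \/ coef (lrepr (Rl n)) w = 1.
Proof.
have [rw | nrw] := boolP (reduced w); last by left; apply: coef_unreduced.
case: n => k; [rewrite lrepr_Rl_pos coef_lmul_lmono | rewrite lrepr_Rl_neg coef_lmono_lmul] => //.
all: exact: coef_paths_poly01.
Qed.

Lemma Rl_mul_R0inv n :
  lpeq (lmul (lrepr (Rl (Posz n))) (lmono wR0inv)) (paths_poly 0 0 n.*2).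
Proof.
apply: lpeq_trans (lmul_congr (lrepr_Rl_pos n) (fun w => erefl)) _.
apply: lpeq_trans (lmulA _ _ _) _; apply: lpeq_trans (lmulr1 _).
by apply: lmul_congr => // w; apply: lpeqbP; vm_compute.
Qed.

Theorem theorem3p7 :
  exists R : int -> lpoly,
    [/\ lpeq (R 0) (lmono wR0),
        lpeq (R 1) (lmono wR1),
        (forall n : int,
            lpeq (lmul (lmul (R (n + 1)) (lmono wC)) (R (n - 1)))
                 (ladd (lmul (R n) (R n)) lone)),
        (forall (n : int) (w : word), coef (R n) w = 0 \/ coef (R n) w = 1)
      & (forall (n : nat) (w : word),
            coef (lmul (R (Posz n)) (lmono wR0inv)) w != 0 ->
            exists! p : seq bool,
              size p = (2 * n)%N /\
              exists u : word, pathw 0 p = Some u /\ reduce u = w)].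
Proof.
exists (fun n => lrepr (Rl n)); split.
- by apply/lclass_eqP; rewrite lreprK Rl0.
- by apply/lclass_eqP; rewrite lreprK Rl1.
- by move=> n; apply/lclass_eqP; rewrite lclassD !lclassM !lreprK Rl_frieze.
- exact: coef_Rl01.
- by move=> n w; rewrite Rl_mul_R0inv mul2n; apply: coef_paths_poly_pathw.
Qed.
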